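(* Let $T\in\mathcal{B}(\mathcal{H})$ be power bounded and let $L$ be a Banach limit such that $A_{T,L}\neq 0$. Then $\|A_{T,L}\|\geq 1$. In particular, if $T$ is a contraction with $A_T\neq 0$, then $\|A_T\|=1$.
   Context: $\mathcal{H}$ is a complex Hilbert space and $\mathcal{B}(\mathcal{H})$ the algebra of bounded linear operators on it. An operator $T$ is power bounded if $\sup_{n\in\mathbb{N}}\|T^n\|<\infty$. A Banach limit is a linear functional $L$ on $\ell^\infty(\mathbb{N})$, written $\{x_n\}\mapsto \operatorname{L-lim}_{n\to\infty}x_n$, such that $\|L\|=1$, $\operatorname{L-lim}x_n=\lim x_n$ for convergent sequences, $\operatorname{L-lim}x_n\ge 0$ whenever all $x_n\ge0$, and $\operatorname{L-lim}x_n=\operatorname{L-lim}x_{n+1}$. For a power bounded $T$ and a Banach limit $L$, the $L$-asymptotic limit $A_{T,L}$ is the unique positive operator with $\langle A_{T,L}x,y\rangle=\operatorname{L-lim}_{n\to\infty}\langle T^{*n}T^nx,y\rangle$ for all $x,y\in\mathcal{H}$. For a contraction $T$ ($\|T\|\le1$), the sequence $T^{*n}T^n$ converges in the strong operator topology to a positive operator $A_T$, the asymptotic limit of $T$ (it equals $A_{T,L}$ for every Banach limit $L$). *)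

From Stdlib Require Import Reals Lra.
Open Scope R_scope.

Record Cplx := mkC { re : R ; im : R }.
Definition C0 : Cplx := mkC 0 0.
Definition C1 : Cplx := mkC 1 0.
Definition Cadd (a b : Cplx) : Cplx := mkC (re a + re b) (im a + im b).
Definition Cmul (a b : Cplx) : Cplx :=
  mkC (re a * re b - im a * im b) (re a * im b + im a * re b).
Definition Cconj (a : Cplx) : Cplx := mkC (re a) (- im a).

Record CHilbert := {
  carrier :> Type;
  vzero : carrier;
  vadd : carrier -> carrier -> carrier;
  vopp : carrier -> carrier;
  vscal : Cplx -> carrier -> carrier;
  inner : carrier -> carrier -> Cplx;
  vadd_assoc : forall x y z, vadd x (vadd y z) = vadd (vadd x y) z;
  vadd_comm : forall x y, vadd x y = vadd y x;
  vadd_zero : forall x, vadd x vzero = x;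
  vadd_opp : forall x, vadd x (vopp x) = vzero;
  vscal_one : forall x, vscal C1 x = x;
  vscal_mul : forall a b x, vscal (Cmul a b) x = vscal a (vscal b x);
  vscal_addv : forall a x y, vscal a (vadd x y) = vadd (vscal a x) (vscal a y);
  vscal_adds : forall a b x, vscal (Cadd a b) x = vadd (vscal a x) (vscal b x);
  inner_addl : forall x y z, inner (vadd x y) z = Cadd (inner x z) (inner y z);
  inner_scall : forall a x y, inner (vscal a x) y = Cmul a (inner x y);
  inner_conj : forall x y, inner y x = Cconj (inner x y);
  inner_pos : forall x, 0 <= re (inner x x);
  inner_def : forall x, inner x x = C0 -> x = vzero;
  complete : forall u : nat -> carrier,
    (forall eps, eps > 0 -> exists N, forall n m, (n >= N)%nat -> (m >= N)%nat ->
        sqrt (re (inner (vadd (u n) (vopp (u m))) (vadd (u n) (vopp (u m))))) < eps) ->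
    exists l, forall eps, eps > 0 -> exists N, forall n, (n >= N)%nat ->
        sqrt (re (inner (vadd (u n) (vopp l)) (vadd (u n) (vopp l)))) < eps
}.

Arguments vzero {c}. Arguments vadd {c}. Arguments vopp {c}.
Arguments vscal {c}. Arguments inner {c}.

Definition vnorm {H : CHilbert} (x : H) : R := sqrt (re (inner x x)).

Definition is_linear {H : CHilbert} (T : H -> H) : Prop :=
  (forall x y, T (vadd x y) = vadd (T x) (T y)) /\
  (forall a x, T (vscal a x) = vscal a (T x)).

Definition bounded_op {H : CHilbert} (T : H -> H) : Prop :=
  is_linear T /\ exists M, forall x, vnorm (T x) <= M * vnorm x.

Definition op_norm_is {H : CHilbert} (T : H -> H) (r : R) : Prop :=
  is_lub (fun t => exists x : H, vnorm x <= 1 /\ t = vnorm (T x)) r.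

Definition op_pow {H : CHilbert} (T : H -> H) (n : nat) : H -> H :=
  fun x => Nat.iter n T x.

Definition is_adjoint {H : CHilbert} (T S : H -> H) : Prop :=
  forall x y, inner (T x) y = inner x (S y).

Definition power_bounded {H : CHilbert} (T : H -> H) : Prop :=
  bounded_op T /\ exists M, forall n x, vnorm (op_pow T n x) <= M * vnorm x.

Definition contraction {H : CHilbert} (T : H -> H) : Prop :=
  bounded_op T /\ forall x, vnorm (T x) <= vnorm x.

Definition bounded_seq (u : nat -> R) : Prop := exists M, forall n, Rabs (u n) <= M.

Definition banach_limit (L : (nat -> R) -> R) : Prop :=
  (forall u v, bounded_seq u -> bounded_seq v -> L (fun n => u n + v n) = L u + L v) /\
  (forall a u, bounded_seq u -> L (fun n => a * u n) = a * L u) /\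
  (* ||L|| = 1 : |L u| <= sup |u_n|, and the bound is attained (L 1 = 1) *)
  (forall u M, (forall n, Rabs (u n) <= M) -> Rabs (L u) <= M) /\
  (forall u l, Un_cv u l -> L u = l) /\
  (forall u, bounded_seq u -> (forall n, 0 <= u n) -> 0 <= L u) /\
  (forall u, bounded_seq u -> L (fun n => u (S n)) = L u).

Definition C_Llim (L : (nat -> R) -> R) (z : nat -> Cplx) : Cplx :=
  mkC (L (fun n => re (z n))) (L (fun n => im (z n))).

Definition is_L_asymptotic_limit {H : CHilbert} (T Tstar : H -> H)
    (L : (nat -> R) -> R) (A : H -> H) : Prop :=
  bounded_op A /\
  forall x y, inner (A x) y = C_Llim L (fun n => inner (op_pow Tstar n (op_pow T n x)) y).

Definition is_asymptotic_limit {H : CHilbert} (T Tstar : H -> H) (A : H -> H) : Prop :=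
  bounded_op A /\
  forall x, forall eps, eps > 0 -> exists N, forall n, (n >= N)%nat ->
    vnorm (vadd (op_pow Tstar n (op_pow T n x)) (vopp (A x))) < eps.

Definition nonzero_op {H : CHilbert} (A : H -> H) : Prop := exists x, A x <> vzero.

From Stdlib Require Import Reals Lra Psatz FunctionalExtensionality.
Open Scope R_scope.

(* Let q(z) = Re <A z, z>.  In both cases q is T-invariant (shift invariance of
   the Banach limit, resp. of ordinary limits), so
   q(z) = q(T^n z) <= ||A|| ||T^n z||^2 for every n, and passing to the limit
   gives q(z) <= ||A|| q(z).  Cauchy-Schwarz for the positive form q shows that
   q(z) > 0 for some z as soon as A <> 0, whence ||A|| >= 1.  For a contraction,
   ||T^n z|| <= ||z|| gives q(z) <= ||z||^2, and Cauchy-Schwarz for q again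
   yields ||A z||^4 <= q(z) q(A z) <= ||z||^2 ||A z||^2, i.e. ||A|| <= 1. *)

Definition Creal (s : R) : Cplx := mkC s 0.

Definition sqnorm {H : CHilbert} (a : H) : R := re (inner a a).

Section RealInner.

Context {H : CHilbert}.

Lemma re_inner_addl (a b c : H) :
  re (inner (vadd a b) c) = re (inner a c) + re (inner b c).
Proof. now rewrite inner_addl. Qed.

Lemma re_inner_scall s (a c : H) :
  re (inner (vscal (Creal s) a) c) = s * re (inner a c).
Proof. rewrite inner_scall. simpl. ring. Qed.

Lemma re_inner_sym (a b : H) : re (inner a b) = re (inner b a).
Proof. now rewrite (inner_conj H b a). Qed.

Lemma re_inner_zero_l (y : H) : re (inner vzero y) = 0.
Proof.
  pose proof (re_inner_addl vzero vzero y) as E. rewrite vadd_zero in E. lra.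
Qed.

Lemma re_inner_opp_l (v y : H) : re (inner (vopp v) y) = - re (inner v y).
Proof.
  pose proof (re_inner_addl v (vopp v) y) as E.
  rewrite vadd_opp, re_inner_zero_l in E. lra.
Qed.

Lemma im_inner_self (a : H) : im (inner a a) = 0.
Proof. pose proof (f_equal im (inner_conj H a a)) as E. simpl in E. lra. Qed.

Lemma sqnorm_ge0 (a : H) : 0 <= sqnorm a.
Proof. apply inner_pos. Qed.

Lemma sqnorm_eq0 (a : H) : sqnorm a = 0 -> a = vzero.
Proof.
  unfold sqnorm. intro E. apply inner_def.
  destruct (inner a a) as [x y] eqn:Eaa. simpl in E. subst x.
  pose proof (im_inner_self a) as Im. rewrite Eaa in Im. simpl in Im. now subst y.
Qed.

Lemma vnorm_ge0 (a : H) : 0 <= vnorm a.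
Proof. apply sqrt_pos. Qed.

Lemma sqnorm_vnorm (a : H) : sqnorm a = vnorm a * vnorm a.
Proof. unfold vnorm. now rewrite sqrt_sqrt by apply inner_pos. Qed.

Lemma sqnorm_le_of_vnorm_le (a : H) r : vnorm a <= r -> sqnorm a <= r * r.
Proof. intro Ha. rewrite sqnorm_vnorm. pose proof (vnorm_ge0 a). nra. Qed.

Lemma vnorm_le_of_sqnorm_le (a b : H) : sqnorm a <= sqnorm b -> vnorm a <= vnorm b.
Proof. intro Hab. now apply sqrt_le_1_alt. Qed.

Lemma vnorm_zero : vnorm (@vzero H) = 0.
Proof. unfold vnorm. now rewrite re_inner_zero_l, sqrt_0. Qed.

Lemma sqnorm_scal c (a : H) : sqnorm (vscal (Creal c) a) = c * c * sqnorm a.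
Proof. unfold sqnorm. rewrite re_inner_scall, re_inner_sym, re_inner_scall. ring. Qed.

End RealInner.

Lemma quadratic_nonneg_discriminant (a b c : R) :
  0 <= a -> (forall s, 0 <= a * s * s + 2 * b * s + c) -> b * b <= a * c.
Proof.
  intros Ha Hs. destruct (Req_dec a 0) as [Ea|Ea].
  - subst a. destruct (Req_dec b 0) as [Eb|Eb]; [subst; lra|].
    specialize (Hs (- (c + 1) / (2 * b))).
    assert (2 * b * (- (c + 1) / (2 * b)) = - (c + 1)) by (field; auto). nra.
  - specialize (Hs (- b / a)).
    assert (a * (- b / a) * (- b / a) + 2 * b * (- b / a) = - (b * b / a))
      by (field; auto).
    assert (b * b / a * a = b * b) by (field; auto). nra.
Qed.

Lemma form_Cauchy_Schwarz (H : CHilbert) (g : H -> H -> R) :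
  (forall a b c, g (vadd a b) c = g a c + g b c) ->
  (forall s a c, g (vscal (Creal s) a) c = s * g a c) ->
  (forall a b, g a b = g b a) ->
  (forall a, 0 <= g a a) ->
  forall a b, g a b * g a b <= g a a * g b b.
Proof.
  intros gaddl gscall gsym gpos a b.
  apply quadratic_nonneg_discriminant; [apply gpos|]. intro s.
  pose proof (gpos (vadd (vscal (Creal s) a) b)) as P.
  rewrite gaddl, !gscall, (gsym a), (gsym b), !gaddl, !gscall, (gsym b a) in P.
  nra.
Qed.

Lemma re_inner_Cauchy_Schwarz (H : CHilbert) (a b : H) :
  re (inner a b) * re (inner a b) <= sqnorm a * sqnorm b.
Proof.
  apply (form_Cauchy_Schwarz H (fun a b => re (inner a b))).
  - apply re_inner_addl.
  - apply re_inner_scall.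
  - apply re_inner_sym.
  - apply inner_pos.
Qed.

Lemma Rabs_re_inner_le (H : CHilbert) (a b : H) :
  Rabs (re (inner a b)) <= vnorm a * vnorm b.
Proof.
  apply Rsqr_incr_0_var.
  - rewrite <- Rsqr_abs. unfold Rsqr.
    replace (vnorm a * vnorm b * (vnorm a * vnorm b))
      with (sqnorm a * sqnorm b) by (rewrite !sqnorm_vnorm; ring).
    apply re_inner_Cauchy_Schwarz.
  - apply Rmult_le_pos; apply vnorm_ge0.
Qed.

Definition qform {H : CHilbert} (A : H -> H) (z : H) : R := re (inner (A z) z).

Lemma op_norm_ge0 (H : CHilbert) (A : H -> H) r : op_norm_is A r -> 0 <= r.
Proof.
  intros [Hub _]. apply Rle_trans with (vnorm (A vzero)); [apply vnorm_ge0|].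
  apply Hub. exists vzero. rewrite vnorm_zero. split; [lra | reflexivity].
Qed.

Lemma sqnorm_apply_le (H : CHilbert) (A : H -> H) r (y : H) :
  (forall a x, A (vscal a x) = vscal a (A x)) -> op_norm_is A r ->
  0 < sqnorm y -> sqnorm (A y) <= r * r * sqnorm y.
Proof.
  intros Ascal [Hub _] Hy.
  set (c := / vnorm y).
  assert (Hvy : 0 < vnorm y) by (unfold vnorm; now apply sqrt_lt_R0).
  assert (Hc : c * c * sqnorm y = 1).
  { unfold c. rewrite sqnorm_vnorm. field. lra. }
  assert (Hunit : vnorm (vscal (Creal c) y) <= 1).
  { unfold vnorm. fold (sqnorm (vscal (Creal c) y)).
    rewrite sqnorm_scal, Hc, sqrt_1; apply Rle_refl. }
  assert (HA : sqnorm (vscal (Creal c) (A y)) <= r * r).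
  { apply sqnorm_le_of_vnorm_le. rewrite <- Ascal. apply Hub. eauto. }
  rewrite sqnorm_scal in HA.
  rewrite <- (Rmult_1_l (sqnorm (A y))), <- Hc. nra.
Qed.

Lemma qform_le_op_norm (H : CHilbert) (A : H -> H) r (y : H) :
  (forall a x, A (vscal a x) = vscal a (A x)) -> op_norm_is A r ->
  qform A y <= r * sqnorm y.
Proof.
  intros Ascal Hr. unfold qform.
  pose proof (re_inner_Cauchy_Schwarz H (A y) y) as CS.
  destruct (sqnorm_ge0 y) as [Hy|Hy].
  - apply Rsqr_incr_0_var.
    + unfold Rsqr. eapply Rle_trans; [exact CS|].
      replace (r * sqnorm y * (r * sqnorm y)) with (r * r * sqnorm y * sqnorm y) by ring.
      apply Rmult_le_compat_r; [lra|]. now apply sqnorm_apply_le.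
    + apply Rmult_le_pos; [exact (op_norm_ge0 H A r Hr) | lra].
  - rewrite <- Hy, Rmult_0_r in *. nra.
Qed.

Section PositiveOperator.

Variables (H : CHilbert) (A : H -> H).
Hypothesis A_linear : is_linear A.
Hypothesis A_sym : forall x y, re (inner (A x) y) = re (inner (A y) x).
Hypothesis A_pos : forall z, 0 <= qform A z.

Lemma qform_Cauchy_Schwarz (a b : H) :
  re (inner (A a) b) * re (inner (A a) b) <= qform A a * qform A b.
Proof.
  destruct A_linear as [Aadd Ascal].
  apply (form_Cauchy_Schwarz H (fun a b => re (inner (A a) b))); auto.
  - intros. rewrite Aadd. apply re_inner_addl.
  - intros. rewrite Ascal. apply re_inner_scall.
Qed.

Lemma sqnorm_apply_sq_le (x : H) :
  sqnorm (A x) * sqnorm (A x) <= qform A x * qform A (A x).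
Proof. apply qform_Cauchy_Schwarz. Qed.

Lemma qform_pos_of_nonzero : nonzero_op A -> exists x, 0 < qform A x.
Proof.
  intros [x Hx]. exists x.
  assert (HAx : 0 < sqnorm (A x)).
  { destruct (sqnorm_ge0 (A x)) as [h|h]; [exact h|].
    now contradict Hx; apply sqnorm_eq0. }
  pose proof (sqnorm_apply_sq_le x). pose proof (A_pos (A x)).
  destruct (A_pos x) as [h|h]; [exact h|]. rewrite <- h in *. nra.
Qed.

Lemma sqnorm_apply_le_of_qform_le (x : H) :
  (forall z, qform A z <= sqnorm z) -> sqnorm (A x) <= sqnorm x.
Proof.
  intro Hle.
  pose proof (sqnorm_apply_sq_le x) as CS.
  pose proof (Hle x). pose proof (Hle (A x)). pose proof (A_pos x).
  pose proof (A_pos (A x)). pose proof (sqnorm_ge0 x).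
  destruct (sqnorm_ge0 (A x)) as [h|h]; [|rewrite <- h; lra].
  assert (sqnorm (A x) * sqnorm (A x) <= sqnorm x * sqnorm (A x)).
  { eapply Rle_trans; [exact CS|].
    apply Rmult_le_compat; lra. }
  nra.
Qed.

Lemma op_norm_le1_of_qform_le_sqnorm r :
  (forall z, qform A z <= sqnorm z) -> op_norm_is A r -> r <= 1.
Proof.
  intros Hle [_ Hlub]. apply Hlub. intros t [x [Hx ->]].
  eapply Rle_trans; [|exact Hx].
  now apply vnorm_le_of_sqnorm_le, sqnorm_apply_le_of_qform_le.
Qed.

Lemma op_norm_ge1_of_invariant_qform (T : H -> H) r :
  (forall z, qform A (T z) = qform A z) ->
  (forall x c, (forall n, c <= sqnorm (op_pow T n x)) -> c <= qform A x) ->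
  nonzero_op A -> op_norm_is A r -> 1 <= r.
Proof.
  intros Hinv Hlower Hnz Hr.
  destruct (qform_pos_of_nonzero Hnz) as [x Hx].
  assert (Hpow : forall n z, qform A (op_pow T n z) = qform A z).
  { induction n as [|n IH]; intro z; [reflexivity|].
    change (op_pow T (S n) z) with (T (op_pow T n z)). now rewrite Hinv. }
  assert (Hbound : forall n, qform A x <= r * sqnorm (op_pow T n x)).
  { intro n. rewrite <- (Hpow n x). apply qform_le_op_norm; [apply A_linear | exact Hr]. }
  assert (Hr0 : 0 < r).
  { pose proof (Hbound 0%nat). pose proof (sqnorm_ge0 x). simpl in *. nra. }
  assert (Hlim : qform A x / r <= qform A x).
  { apply Hlower. intro n. apply Rmult_le_reg_l with r; [exact Hr0|].
    field_simplify; [apply Hbound | lra]. }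
  apply Rmult_le_reg_l with (qform A x / r); [now apply Rdiv_lt_0_compat|].
  replace (qform A x / r * r) with (qform A x) by (field; lra). lra.
Qed.

End PositiveOperator.

Definition orbit_gram {H : CHilbert} (T : H -> H) (x y : H) (n : nat) : R :=
  re (inner (op_pow T n x) (op_pow T n y)).

Lemma op_pow_succ_r (H : CHilbert) (T : H -> H) n z :
  op_pow T n (T z) = op_pow T (S n) z.
Proof. unfold op_pow. now rewrite Nat.iter_succ_r. Qed.

Lemma orbit_gram_sym (H : CHilbert) (T : H -> H) x y :
  orbit_gram T x y = orbit_gram T y x.
Proof. apply functional_extensionality. intro n. apply re_inner_sym. Qed.

Lemma orbit_gram_apply (H : CHilbert) (T : H -> H) x y :
  orbit_gram T (T x) (T y) = fun n => orbit_gram T x y (S n).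
Proof.
  apply functional_extensionality. intro n. unfold orbit_gram.
  now rewrite !op_pow_succ_r.
Qed.

Lemma inner_adjoint_pow (H : CHilbert) (T Tstar : H -> H) :
  is_adjoint T Tstar ->
  forall n u z, inner (op_pow Tstar n u) z = inner u (op_pow T n z).
Proof.
  intros Hadj n. induction n as [|n IH]; intros u z; [reflexivity|].
  change (op_pow Tstar (S n) u) with (Tstar (op_pow Tstar n u)).
  rewrite (inner_conj H z), <- Hadj, <- inner_conj, IH, op_pow_succ_r.
  reflexivity.
Qed.

Lemma re_inner_adjoint_orbit (H : CHilbert) (T Tstar : H -> H) x y n :
  is_adjoint T Tstar ->
  re (inner (op_pow Tstar n (op_pow T n x)) y) = orbit_gram T x y n.
Proof. intro Hadj. unfold orbit_gram. now rewrite (inner_adjoint_pow H T Tstar). Qed.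

Lemma bounded_seq_const c : bounded_seq (fun _ => c).
Proof. exists (Rabs c). intro. lra. Qed.

Lemma bounded_seq_add u v :
  bounded_seq u -> bounded_seq v -> bounded_seq (fun n => u n + v n).
Proof.
  intros [M HM] [N HN]. exists (M + N). intro n.
  eapply Rle_trans; [apply Rabs_triang|]. now apply Rplus_le_compat.
Qed.

Lemma Un_cv_const c : Un_cv (fun _ => c) c.
Proof.
  intros eps Heps. exists 0%nat. intros. unfold R_dist.
  rewrite Rminus_diag, Rabs_R0. lra.
Qed.

Lemma banach_limit_const L c : banach_limit L -> L (fun _ => c) = c.
Proof. intros (_ & _ & _ & Llim & _). apply Llim, Un_cv_const. Qed.

Lemma banach_limit_ge L u c :
  banach_limit L -> bounded_seq u -> (forall n, c <= u n) -> c <= L u.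
Proof.
  intros HL Hu Hc. pose proof HL as (Ladd & _ & _ & _ & Lpos & _).
  assert (Hsum : L (fun n => u n + - c) = L u - c).
  { rewrite Ladd by (auto using bounded_seq_const).
    rewrite (banach_limit_const L (- c) HL). ring. }
  assert (0 <= L (fun n => u n + - c)); [|lra].
  apply Lpos; [apply bounded_seq_add; auto using bounded_seq_const|].
  intro n. specialize (Hc n). lra.
Qed.

Lemma orbit_gram_bounded (H : CHilbert) (T : H -> H) x y :
  power_bounded T -> bounded_seq (orbit_gram T x y).
Proof.
  intros [_ [M HM]].
  exists (M * vnorm x * (M * vnorm y)). intro n. unfold orbit_gram.
  eapply Rle_trans; [apply Rabs_re_inner_le|].
  apply Rmult_le_compat; try apply vnorm_ge0; apply HM.
Qed.

Lemma op_norm_L_asymptotic_limit_ge1 (H : CHilbert) (T Tstar : H -> H)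
    (L : (nat -> R) -> R) (A : H -> H) :
  power_bounded T -> is_adjoint T Tstar -> banach_limit L ->
  is_L_asymptotic_limit T Tstar L A -> nonzero_op A ->
  forall r, op_norm_is A r -> 1 <= r.
Proof.
  intros HT Hadj HL [[Alin _] HA] Hnz r Hr.
  pose proof HL as (_ & _ & _ & _ & Lpos & Lshift).
  assert (Lrep : forall x y, re (inner (A x) y) = L (orbit_gram T x y)).
  { intros x y. rewrite HA. simpl. f_equal. apply functional_extensionality.
    intro n. now apply re_inner_adjoint_orbit. }
  apply (op_norm_ge1_of_invariant_qform H A Alin) with (T := T); auto; unfold qform.
  - intros x y. now rewrite !Lrep, orbit_gram_sym.
  - intro z. rewrite Lrep. apply Lpos; [now apply orbit_gram_bounded|].
    intro n. apply inner_pos.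
  - intro z. rewrite !Lrep, orbit_gram_apply. now apply Lshift, orbit_gram_bounded.
  - intros x c Hc. rewrite Lrep.
    apply banach_limit_ge; [exact HL | now apply orbit_gram_bounded | exact Hc].
Qed.

Lemma Un_cv_succ u l : Un_cv u l -> Un_cv (fun n => u (S n)) l.
Proof. intros Hu eps Heps. destruct (Hu eps Heps) as [N HN]. exists N. auto. Qed.

Lemma sqnorm_contraction_pow_le (H : CHilbert) (T : H -> H) :
  contraction T -> forall n z, sqnorm (op_pow T n z) <= sqnorm z.
Proof.
  intros [_ HT] n. induction n as [|n IH]; intro z; [apply Rle_refl|].
  change (op_pow T (S n) z) with (T (op_pow T n z)).
  eapply Rle_trans; [|apply IH]. rewrite !sqnorm_vnorm.
  apply Rmult_le_compat; auto using vnorm_ge0.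
Qed.

Lemma asymptotic_limit_orbit_gram_cv (H : CHilbert) (T Tstar A : H -> H) :
  is_adjoint T Tstar -> is_asymptotic_limit T Tstar A ->
  forall x y, Un_cv (orbit_gram T x y) (re (inner (A x) y)).
Proof.
  intros Hadj [_ HA] x y eps Heps.
  set (K := vnorm y + 1).
  assert (HK : 0 < K) by (pose proof (vnorm_ge0 y); unfold K; lra).
  destruct (HA x (eps / K)) as [N HN]; [now apply Rdiv_lt_0_compat|].
  exists N. intros n Hn. unfold R_dist.
  rewrite <- (re_inner_adjoint_orbit H T Tstar) by exact Hadj.
  set (d := vadd (op_pow Tstar n (op_pow T n x)) (vopp (A x))).
  replace (_ - _) with (re (inner d y)) by (unfold d; rewrite re_inner_addl, re_inner_opp_l; ring).
  eapply Rle_lt_trans; [apply Rabs_re_inner_le|].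
  specialize (HN n Hn). fold d in HN.
  pose proof (vnorm_ge0 d). pose proof (vnorm_ge0 y).
  assert (eps / K * K = eps) by (field; lra).
  assert (vnorm y < K) by (unfold K; lra).
  nra.
Qed.

Lemma op_norm_asymptotic_limit_eq1 (H : CHilbert) (T Tstar A : H -> H) :
  contraction T -> is_adjoint T Tstar ->
  is_asymptotic_limit T Tstar A -> nonzero_op A ->
  forall r, op_norm_is A r -> r = 1.
Proof.
  intros HT Hadj HA Hnz r Hr.
  pose proof (asymptotic_limit_orbit_gram_cv H T Tstar A Hadj HA) as Hcv.
  destruct HA as [[Alin _] _].
  assert (Asym : forall x y, re (inner (A x) y) = re (inner (A y) x)).
  { intros x y. apply (UL_sequence (orbit_gram T x y)); [apply Hcv|].
    rewrite orbit_gram_sym. apply Hcv. }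
  assert (Hlower : forall x c, (forall n, c <= sqnorm (op_pow T n x)) -> c <= qform A x).
  { intros x c Hc. exact (Rle_cv_lim Hc (Un_cv_const c) (Hcv x x)). }
  assert (Apos : forall z, 0 <= qform A z).
  { intro z. apply Hlower. intro n. apply sqnorm_ge0. }
  apply Rle_antisym.
  - apply (op_norm_le1_of_qform_le_sqnorm H A Alin Asym Apos); [|exact Hr].
    intro z. apply (Rle_cv_lim (fun n => sqnorm_contraction_pow_le H T HT n z));
      [apply Hcv | apply Un_cv_const].
  - apply (op_norm_ge1_of_invariant_qform H A Alin Asym Apos T); auto.
    intro z. apply (UL_sequence (orbit_gram T (T z) (T z))); [apply Hcv|].
    rewrite orbit_gram_apply. now apply Un_cv_succ.
Qed.

Theorem mainTheorem1 :
  (forall (H : CHilbert) (T Tstar : H -> H) (L : (nat -> R) -> R) (A : H -> H),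
     power_bounded T -> is_adjoint T Tstar -> banach_limit L ->
     is_L_asymptotic_limit T Tstar L A -> nonzero_op A ->
     forall r, op_norm_is A r -> 1 <= r) /\
  (forall (H : CHilbert) (T Tstar : H -> H) (A : H -> H),
     contraction T -> is_adjoint T Tstar ->
     is_asymptotic_limit T Tstar A -> nonzero_op A ->
     forall r, op_norm_is A r -> r = 1).
Proof.
  split.
  - exact op_norm_L_asymptotic_limit_ge1.
  - exact op_norm_asymptotic_limit_eq1.
Qed.
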